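(* Under the hypotheses below, assume moreover (UPS): whenever $(x_n)\subset\mathcal{M}$ and $\beta_n\to+\infty$ satisfy $J_{\beta_n}(x_n)\to c_\infty$ and $J_{\beta_n}(\eta_{\beta_n}(x_n))\to c_\infty$, there exists $\bar x\in\mathcal{M}$ such that, up to a subsequence, $x_n\to\bar x$ and $\eta_{\beta_n}(x_n)\to\bar x$. Then $\mathcal{C}_*\cap\mathcal{K}_\infty\neq\emptyset$. More precisely, for every sequence $\beta_n\to+\infty$ and $A_n\in\mathcal{F}$ optimal for $J_{\beta_n}$ at $c_{\beta_n}$, there exists $\bar x\in\mathcal{C}_*\cap\mathcal{K}_\infty\cap\limsup_nA_n$.
   Context: Hypotheses: $(\mathcal{M},\mathrm{dist})$ is a metric space, $\mathcal{F}\subset2^{\mathcal{M}}$; $J_\beta:\mathcal{M}\to\mathbb{R}\cup\{+\infty\}$, $0<\beta<+\infty$, are lower semi-continuous with $J_{\beta_1}\le J_{\beta_2}$ for $\beta_1\le\beta_2$; $J_\infty=\sup_{\beta>0}J_\beta$; $c_\beta=\inf_{A\in\mathcal{F}}\sup_AJ_\beta\in\mathbb{R}$ for all $0<\beta\le+\infty$; every $A\in\mathcal{F}$ is closed; for every $(A_n)\subset\mathcal{F}$ such that for some $\beta$, $A_n\subset\mathcal{M}^{c_\infty+1}_\beta:=\{J_\beta\le c_\infty+1\}$ for all $n$, $\limsup_nA_n\in\mathcal{F}$ (here $\limsup_nA_n$ is the set of limits of sequences $x_{n_j}\in A_{n_j}$, $n_j\to\infty$); for each $0<\beta\le+\infty$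 a map $\eta_\beta:\mathcal{M}^{c_\infty+1}_\beta\to\mathcal{M}^{c_\infty+1}_\beta$ with $\eta_\beta(A)\in\mathcal{F}$ whenever $A\in\mathcal{F}$, $A\subset\mathcal{M}^{c_\infty+1}_\beta$, and $J_\beta(\eta_\beta(x))\le J_\beta(x)$; and for each $0<\beta\le+\infty$, every sequence $x_n$ with $J_\beta(x_n)\to c_\beta$, $J_\beta(\eta_\beta(x_n))\to c_\beta$ has a subsequence converging to a point of $\mathcal{K}_\beta=\{x:J_\beta(x)=J_\beta(\eta_\beta(x))=c_\beta\}$. A set $A$ is optimal for $J$ at $c$ if $A\in\mathcal{F}$ and $\sup_AJ=c$. $\mathcal{C}_*$ is the set of $x\in\mathcal{M}$ for which there are $(x_n)\subset\mathcal{M}$, $\beta_n\to+\infty$ with $x_n\to x$, $J_{\beta_n}(x_n)\to c_\infty$ and $J_{\beta_n}(\eta_{\beta_n}(x_n))\to c_\infty$. *)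

From HB Require Import structures.
From mathcomp Require Import all_boot all_order all_algebra.
From mathcomp Require Import all_classical all_reals all_analysis.
Set Implicit Arguments. Unset Strict Implicit. Unset Printing Implicit Defensive.
Import Order.TTheory GRing.Theory Num.Theory.
Local Open Scope classical_set_scope.
Local Open Scope ring_scope.

Section Defs.
Variables (R : realType) (M : Type) (dist : M -> M -> R).

Definition is_metric : Prop :=
  [/\ forall x y, dist x y = 0 <-> x = y,
      forall x y, dist x y = dist y x &
      forall x y z, dist x z <= dist x y + dist y z].

Definition mball (x : M) (r : R) : set M := [set y | dist x y < r].

Definition mopen (U : set M) : Prop :=
  forall x, U x -> exists2 r : R, 0 < r & mball x r `<=` U.

Definition mclosed (A : set M) : Prop := mopen (~` A).

Definition lsc (f : M -> \bar R) : Prop :=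
  forall t : R, mopen [set x | (t%:E < f x)%E].

Definition mconv (u : nat -> M) (x : M) : Prop :=
  forall eps : R, 0 < eps -> exists N : nat, forall n, (N <= n)%N -> dist (u n) x < eps.

Definition to_pinfty (b : nat -> R) : Prop :=
  forall A : R, exists N : nat, forall n, (N <= n)%N -> A < b n.

Definition subseq_map (phi : nat -> nat) : Prop := forall n, (phi n < phi n.+1)%N.

Definition limsup_set (A : nat -> set M) : set M :=
  [set x | exists (nj : nat -> nat) (y : nat -> M),
      (forall N : nat, exists J : nat, forall j, (J <= j)%N -> (N <= nj j)%N) /\
      (forall j, A (nj j) (y j)) /\ mconv y x].

Variables (F : set (set M)) (J : \bar R -> M -> \bar R) (eta : \bar R -> M -> M).

Definition cval (b : \bar R) : \bar R :=
  ereal_inf [set ereal_sup [set J b x | x in A] | A in F].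

Definition sublevel (b : \bar R) : set M :=
  [set x | (J b x <= cval +oo%E + 1%:E)%E].

Definition Kset (b : \bar R) : set M :=
  [set x | J b x = cval b /\ J b (eta b x) = cval b].

Definition optimal (Jb : M -> \bar R) (c : \bar R) (A : set M) : Prop :=
  F A /\ ereal_sup [set Jb x | x in A] = c.

Definition Cstar : set M :=
  [set x | exists (xn : nat -> M) (bn : nat -> R),
     (forall n, 0 < bn n) /\ to_pinfty bn /\ mconv xn x /\
     (fun n => J (bn n)%:E (xn n)) @ \oo --> cval +oo%E /\
     (fun n => J (bn n)%:E (eta (bn n)%:E (xn n))) @ \oo --> cval +oo%E].

End Defs.

From HB Require Import structures.
From mathcomp Require Import all_boot all_order all_algebra.
From mathcomp Require Import all_classical all_reals all_analysis.
From mathcomp Require Import lra.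
Import Order.TTheory GRing.Theory Num.Theory.
Local Open Scope classical_set_scope.
Local Open Scope ring_scope.
Set Implicit Arguments.
Unset Strict Implicit.

(* Optimal sets need not exist, so work with a sequence A_n of eps_n-optimal
   sets for J_{beta_n}, eps_n -> 0.  Deforming them by eta_{beta_n} keeps them
   eps_n-optimal; their lim sup B lies in F and, by lower semicontinuity and
   monotonicity in beta, J_oo <= c_oo on B, so B is optimal for J_oo and the
   compactness condition at beta = oo (applied to eta_oo(B)) gives a point
   x of B in K_oo.  Writing x = lim eta_{beta_{n_j}}(z_j) with z_j in A_{n_j},
   both J_{beta_{n_j}}(z_j) and J_{beta_{n_j}}(eta(z_j)) tend to c_oo (from
   below by lower semicontinuity at x, from above by eps-optimality), so (UPS)
   forces z_j -> x along a subsequence: x is in C_* and in lim sup A_n. *)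

Lemma near_inftyP (P : nat -> Prop) :
  (\forall n \near \oo, P n) <-> exists N, forall n, (N <= n)%N -> P n.
Proof. by split=> -[N]; [move=> _ PN | move=> PN]; exists N. Qed.

Lemma subseq_map_cvgn (phi : nat -> nat) : subseq_map phi -> phi @ \oo --> \oo.
Proof.
move=> phi_incr; have phi_ge k : (k <= phi k)%N.
  by elim: k => // k ihk; exact: leq_ltn_trans ihk (phi_incr k).
apply/cvgnyPge => N; near=> n; apply: leq_trans (phi_ge n).
by near: n; exact: nbhs_infty_ge.
Unshelve. all: end_near. Qed.

Lemma limsup_indexP (nj : nat -> nat) :
  (forall N, exists J0, forall j, (J0 <= j)%N -> (N <= nj j)%N) <->
  nj @ \oo --> \oo.
Proof.
split=> [nj_ge | /cvgnyPge nj_ge N]; last exact/near_inftyP.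
by apply/cvgnyPge => N; apply/near_inftyP.
Qed.

Lemma to_pinftyP (R : realType) (b : nat -> R) : to_pinfty b <-> b @ \oo --> +oo.
Proof.
split=> [b_gt | /cvgryPgt b_gt A]; last exact/near_inftyP.
by apply/cvgryPgt => A; apply/near_inftyP.
Qed.

Lemma cvgry_pos_lbound (R : realType) (b : nat -> R) :
  (forall n, 0 < b n) -> b @ \oo --> +oo -> exists2 b0, 0 < b0 & forall n, b0 <= b n.
Proof.
move=> b_gt0 /to_pinftyP /(_ 1) [N b_gt1].
suff [b0 b0_gt0 b0_le] : exists2 b0, 0 < b0 & forall n, (n < N)%N -> b0 <= b n.
  exists (Num.min b0 1) => [|n]; first by rewrite lt_min b0_gt0 ltr01.
  have [/b0_le b0_le_n | /b_gt1 /ltW b_ge1] := ltnP n N.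
    by rewrite ge_min b0_le_n.
  by rewrite ge_min b_ge1 orbT.
elim: N {b_gt1} => [|N [b0 b0_gt0 b0_le]]; first by exists 1.
exists (Num.min b0 (b N)) => [|n]; first by rewrite lt_min b0_gt0 b_gt0.
rewrite ltnS leq_eqVlt => /orP[/eqP-> | /b0_le b0_le_n].
  by rewrite ge_min lexx orbT.
by rewrite ge_min b0_le_n.
Qed.

Lemma EFin_lt_dense (R : realType) (c : R) (y : \bar R) :
  (c%:E < y)%E -> exists2 t, c < t & (t%:E < y)%E.
Proof.
case: y => [r | _ | //]; last by exists (c + 1); [rewrite ltrDl | exact: ltry].
by rewrite lte_fin => /midf_lt [? ?]; exists ((c + r) / 2); rewrite ?lte_fin.
Qed.

Lemma cvge_EFin_bounds (R : realType) (u : nat -> \bar R) (c : R) :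
  (forall t, t < c -> \forall n \near \oo, (t%:E < u n)%E) ->
  (forall t, c < t -> \forall n \near \oo, (u n < t%:E)%E) ->
  u @ \oo --> c%:E.
Proof.
move=> u_gt u_lt; apply: cvg_EFin.
  near=> n; rewrite fin_numElt; apply/andP; split.
    by apply: lt_trans (ltNyr (c - 1)) _; near: n; apply: u_gt; rewrite gtrDl.
  by apply: lt_trans (ltry (c + 1)); near: n; apply: u_lt; rewrite ltrDl.
apply/cvgrPdist_lt => e e_gt0; near=> n.
have : ((c - e)%:E < u n)%E by near: n; apply: u_gt; rewrite gtrDl oppr_lt0.
have : (u n < (c + e)%:E)%E by near: n; apply: u_lt; rewrite ltrDl.
by rewrite /=; case: (u n) => [r | //| //]; rewrite !lte_fin ltr_distlC /= => -> ->.
Unshelve. all: end_near. Qed.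

Section MetricConvergence.
Context {R : realType} {M : Type} {dist : M -> M -> R}.
Hypothesis dist_metric : is_metric dist.

Lemma mconvP (u : nat -> M) x :
  mconv dist u x <-> forall e, 0 < e -> \forall n \near \oo, dist (u n) x < e.
Proof. by split=> ux e /ux /near_inftyP. Qed.

Lemma mconv_comp (u : nat -> M) x (phi : nat -> nat) :
  phi @ \oo --> \oo -> mconv dist u x -> mconv dist (u \o phi) x.
Proof. by move=> phi_oo /mconvP ux; apply/mconvP => e /ux; exact: phi_oo. Qed.

Lemma dist_ge0 x y : 0 <= dist x y.
Proof.
have [dist0 dist_sym dist_tri] := dist_metric.
by have := dist_tri x y x; rewrite (proj2 (dist0 x x) erefl) (dist_sym y x); lra.
Qed.

Lemma mconv_uniq (u : nat -> M) x y : mconv dist u x -> mconv dist u y -> x = y.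
Proof.
have [dist0 dist_sym dist_tri] := dist_metric.
move=> /mconvP ux /mconvP uy; apply/dist0/eqP; rewrite eq_le dist_ge0 andbT.
apply/ler_addgt0Pr => e e_gt0; rewrite add0r.
have e2_gt0 : 0 < e / 2 by rewrite divr_gt0.
near \oo => n.
have : dist (u n) x < e / 2 by near: n; exact: ux.
have : dist (u n) y < e / 2 by near: n; exact: uy.
by have := dist_tri x (u n) y; rewrite (dist_sym x (u n)) => ? ? ?; lra.
Unshelve. all: end_near. Qed.

Lemma mclosed_mconv (A : set M) (u : nat -> M) x :
  mclosed dist A -> (forall n, A (u n)) -> mconv dist u x -> A x.
Proof.
have [_ dist_sym _] := dist_metric.
move=> A_closed Au ux; apply: contrapT => Ax.
have [r r_gt0 ball_notA] := A_closed x Ax; have [N uN] := ux r r_gt0.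
by apply: (ball_notA (u N)) (Au N); rewrite /mball /= dist_sym; exact: uN.
Qed.

Lemma lsc_mconv (f : M -> \bar R) (u : nat -> M) x t :
  lsc dist f -> mconv dist u x -> (t%:E < f x)%E ->
  \forall n \near \oo, (t%:E < f (u n))%E.
Proof.
have [_ dist_sym _] := dist_metric.
move=> f_lsc /mconvP ux /(f_lsc t) [r r_gt0 ball_sub].
near=> n; apply: ball_sub; rewrite /mball /= dist_sym.
by near: n; exact: ux.
Unshelve. all: end_near. Qed.

End MetricConvergence.

Definition eps_optimal {R : realType} {M : Type} (F : set (set M))
    (J : \bar R -> M -> \bar R) (b e : R) (A : set M) : Prop :=
  F A /\ forall x, A x -> (J b%:E x <= cval F J b%:E + e%:E)%E.

Section MinimaxLimit.
Context {R : realType} {M : Type} {dist : M -> M -> R}.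
Context {F : set (set M)} {J : \bar R -> M -> \bar R} {eta : \bar R -> M -> M}.

Lemma eps_optimal_exists (b e : R) : 0 < e -> cval F J b%:E \is a fin_num ->
  exists A, eps_optimal F J b e A.
Proof.
move=> e_gt0 /(lb_ereal_inf_adherent e_gt0) [_ [A FA <-] A_lt].
exists A; split => // x Ax; apply: le_trans (ltW A_lt).
by apply: ereal_sup_ubound; exists x.
Qed.

Lemma optimal_eps_optimal (b : R) (A : set M) :
  optimal F (J b%:E) (cval F J b%:E) A -> eps_optimal F J b 0 A.
Proof.
case=> FA A_sup; split => // x Ax; rewrite -A_sup adde0.
by apply: ereal_sup_ubound; exists x.
Qed.

Hypothesis dist_metric : is_metric dist.
Hypothesis J_lsc : forall {b : R}, 0 < b -> lsc dist (J b%:E).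
Hypothesis J_mono : forall {b1 b2 : R}, 0 < b1 -> b1 <= b2 ->
  forall x, (J b1%:E x <= J b2%:E x)%E.
Hypothesis J_infty : forall x,
  J +oo%E x = ereal_sup [set J b%:E x | b in [set b : R | 0 < b]].
Hypothesis F_closed : forall {A}, F A -> mclosed dist A.
Hypothesis F_limsup : forall {An : nat -> set M} {b : \bar R}, (0 < b)%E ->
  (forall n, F (An n)) -> (forall n, An n `<=` sublevel F J b) ->
  F (limsup_set dist An).
Hypothesis eta_F : forall {b : \bar R} {A : set M}, (0 < b)%E -> F A ->
  A `<=` sublevel F J b -> F (eta b @` A).
Hypothesis eta_decr : forall {b : \bar R} {x}, (0 < b)%E -> sublevel F J b x ->
  (J b (eta b x) <= J b x)%E.
Hypothesis PS : forall {b : \bar R} {xn : nat -> M}, (0 < b)%E ->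
  (fun n => J b (xn n)) @ \oo --> cval F J b ->
  (fun n => J b (eta b (xn n))) @ \oo --> cval F J b ->
  exists phi : nat -> nat, subseq_map phi /\
    exists2 x, Kset F J eta b x & mconv dist (xn \o phi) x.
Hypothesis UPS : forall {xn : nat -> M} {bn : nat -> R},
  (forall n, 0 < bn n) -> to_pinfty bn ->
  (fun n => J (bn n)%:E (xn n)) @ \oo --> cval F J +oo%E ->
  (fun n => J (bn n)%:E (eta (bn n)%:E (xn n))) @ \oo --> cval F J +oo%E ->
  exists xbar : M, exists phi : nat -> nat, subseq_map phi /\
    mconv dist (xn \o phi) xbar /\
    mconv dist (fun n => eta (bn (phi n))%:E (xn (phi n))) xbar.

Lemma cval_le_cval_infty (b : R) : 0 < b -> (cval F J b%:E <= cval F J +oo%E)%E.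
Proof.
move=> b_gt0; apply: le_ereal_inf_tmp => _ [A FA <-].
apply: le_trans (ereal_inf_lbound _) _; first by exists A.
apply: ge_ereal_sup => _ [x Ax <-]; apply: (@le_trans _ _ (J +oo%E x)).
  by rewrite J_infty; apply: ereal_sup_ubound; exists b.
by apply: ereal_sup_ubound; exists x.
Qed.

Lemma lt_Jinfty_near (bs : nat -> R) (w : nat -> M) x (t : R) :
  bs @ \oo --> +oo -> mconv dist w x -> (t%:E < J +oo%E x)%E ->
  \forall j \near \oo, (t%:E < J (bs j)%:E (w j))%E.
Proof.
move=> /cvgryPge bs_oo wx; rewrite J_infty => /ereal_sup_gt [_ [b b_gt0 <-] t_lt].
have Jb_gt := lsc_mconv dist_metric (J_lsc b_gt0) wx t_lt.
near=> j; apply: lt_le_trans (J_mono b_gt0 _ (w j)); first by near: j.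
by near: j; exact: bs_oo.
Unshelve. all: end_near. Qed.

Lemma optimal_meets_Kset (b : \bar R) (cb : R) (B : set M) :
  (0 < b)%E -> cval F J b = cb%:E -> F B -> B `<=` sublevel F J b ->
  (forall x, B x -> (J b x <= cb%:E)%E) -> exists2 x, B x & Kset F J eta b x.
Proof.
move=> b_gt0 cbE FB B_sub B_le.
have cb_le : (cb%:E <= ereal_sup [set J b x | x in eta b @` B])%E.
  by rewrite -cbE; apply: ereal_inf_lbound; exists (eta b @` B) => //; exact: eta_F.
have near_sup k : exists x, B x /\ ((cb - harmonic k)%:E < J b (eta b x))%E.
  have : ((cb - harmonic k)%:E < ereal_sup [set J b x | x in eta b @` B])%E.
    by apply: lt_le_trans cb_le; rewrite lte_fin gtrDl oppr_lt0 harmonic_gt0.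
  by case/ereal_sup_gt => _ [_ [x Bx <-] <-]; exists x.
have [xk /all_and2 [B_xk xk_gt]] := choice near_sup.
have J_xk k : (J b (eta b (xk k)) <= J b (xk k) <= cb%:E)%E.
  by rewrite B_le // andbT; exact: eta_decr b_gt0 (B_sub _ (B_xk k)).
have J_eta_xk_gt t : t < cb -> \forall k \near \oo, (t%:E < J b (eta b (xk k)))%E.
  move=> t_lt; near=> k; apply: le_lt_trans (xk_gt k); rewrite lee_fin lerBrDl.
  by rewrite -lerBrDr; near: k; apply: cvgr_le cvg_harmonic _ _; rewrite subr_gt0.
have J_xk_lt t : cb < t -> \forall k \near \oo, (J b (xk k) < t%:E)%E.
  by move=> cb_lt; apply: nearW => k; case/andP: (J_xk k) => _ /le_lt_trans; apply.
have J_xk_cvg : (fun k => J b (xk k)) @ \oo --> cval F J b.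
  rewrite cbE; apply: cvge_EFin_bounds J_xk_lt => t /J_eta_xk_gt.
  by apply: filterS => k /lt_le_trans; apply; case/andP: (J_xk k).
have J_eta_xk_cvg : (fun k => J b (eta b (xk k))) @ \oo --> cval F J b.
  rewrite cbE; apply: cvge_EFin_bounds J_eta_xk_gt _ => t /J_xk_lt.
  by apply: filterS => k; apply: le_lt_trans; case/andP: (J_xk k).
have [phi [_ [x Kx xk_x]]] := PS b_gt0 J_xk_cvg J_eta_xk_cvg.
by exists x; first exact (mclosed_mconv dist_metric (F_closed FB)
  (fun n => B_xk (phi n)) xk_x).
Unshelve. all: end_near. Qed.

Lemma ups_Cstar (bs : nat -> R) (z : nat -> M) x :
  (forall j, 0 < bs j) -> to_pinfty bs ->
  (fun j => J (bs j)%:E (z j)) @ \oo --> cval F J +oo%E ->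
  (fun j => J (bs j)%:E (eta (bs j)%:E (z j))) @ \oo --> cval F J +oo%E ->
  mconv dist (fun j => eta (bs j)%:E (z j)) x ->
  exists psi, subseq_map psi /\ mconv dist (z \o psi) x /\ Cstar dist F J eta x.
Proof.
move=> bs_gt0 bs_oo Jz Jeta_z eta_z_x.
have [y [psi [psi_incr [z_y eta_z_y]]]] := UPS bs_gt0 bs_oo Jz Jeta_z.
have psi_oo := subseq_map_cvgn psi_incr.
have <- : y = x := mconv_uniq dist_metric eta_z_y (mconv_comp psi_oo eta_z_x).
exists psi; split => //; split => //.
exists (z \o psi), (bs \o psi); split; first by move=> n; exact: bs_gt0.
move/to_pinftyP: bs_oo => bs_oo.
split; first by apply/to_pinftyP; exact: cvg_comp _ _ psi_oo bs_oo.
split => //; split; first exact: cvg_comp _ _ psi_oo Jz.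
exact: cvg_comp _ _ psi_oo Jeta_z.
Qed.

Variable c : R.
Hypothesis cval_infty : cval F J +oo%E = c%:E.

Lemma eps_optimal_le (b e : R) (A : set M) x :
  0 < b -> eps_optimal F J b e A -> A x -> (J b%:E x <= (c + e)%:E)%E.
Proof.
move=> b_gt0 [_ A_le] Ax; apply: le_trans (A_le _ Ax) _.
by rewrite EFinD leeD2r // -cval_infty; exact: cval_le_cval_infty.
Qed.

Lemma eps_optimal_sublevel (b e : R) (A : set M) :
  0 < b -> e <= 1 -> eps_optimal F J b e A -> A `<=` sublevel F J b%:E.
Proof.
move=> b_gt0 e_le1 A_opt x Ax; rewrite /sublevel /= cval_infty.
by apply: le_trans (eps_optimal_le b_gt0 A_opt Ax) _; rewrite -EFinD lee_fin lerD2l.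
Qed.

Lemma eta_eps_optimal (b e : R) (A : set M) :
  0 < b -> e <= 1 -> eps_optimal F J b e A -> eps_optimal F J b e (eta b%:E @` A).
Proof.
move=> b_gt0 e_le1 A_opt; have A_sub := eps_optimal_sublevel b_gt0 e_le1 A_opt.
have bE_gt0 : (0 < b%:E)%E by rewrite lte_fin.
case: A_opt => FA A_le; split; first exact: eta_F.
by move=> _ [x Ax <-]; apply: le_trans (A_le _ Ax); exact: eta_decr (A_sub _ Ax).
Qed.

Section EpsOptimalSequence.
Variables (bn en : nat -> R).
Hypotheses (bn_gt0 : forall n, 0 < bn n) (bn_oo : bn @ \oo --> +oo).
Hypotheses (en_le1 : forall n, en n <= 1) (en_cvg0 : en @ \oo --> 0).

Lemma limsup_Jinfty_le (An : nat -> set M) x :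
  (forall n, eps_optimal F J (bn n) (en n) (An n)) -> limsup_set dist An x ->
  (J +oo%E x <= c%:E)%E.
Proof.
move=> An_opt [nj [y [/limsup_indexP nj_oo [Ay y_x]]]].
rewrite leNgt; apply/negP => /EFin_lt_dense [t c_lt t_lt].
have bnj_oo := cvg_comp _ _ nj_oo bn_oo.
have J_gt := lt_Jinfty_near bnj_oo y_x t_lt.
have en_lt : \forall j \near \oo, en (nj j) < t - c.
  by apply: cvgr_lt (cvg_comp _ _ nj_oo en_cvg0) _ _; rewrite subr_gt0.
near \oo => j.
have t_lt_J : (t%:E < J (bn (nj j))%:E (y j))%E by near: j.
have en_lt_j : en (nj j) < t - c by near: j.
have := lt_le_trans t_lt_J (eps_optimal_le (bn_gt0 _) (An_opt _) (Ay j)).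
by rewrite lte_fin; lra.
Unshelve. all: end_near. Qed.

Lemma limsup_eps_optimal_F (An : nat -> set M) :
  (forall n, eps_optimal F J (bn n) (en n) (An n)) -> F (limsup_set dist An).
Proof.
move=> An_opt; have [b0 b0_gt0 b0_le] := cvgry_pos_lbound bn_gt0 bn_oo.
apply: (F_limsup (b := b0%:E)) => [|n|n x Ax]; first by rewrite lte_fin.
  by case: (An_opt n).
apply: le_trans (J_mono b0_gt0 (b0_le n) x) _.
exact: eps_optimal_sublevel (bn_gt0 n) (en_le1 n) (An_opt n) _ Ax.
Qed.

Lemma eps_optimal_values_cvg (An : nat -> set M) (nj : nat -> nat) (z : nat -> M) x :
  (forall n, eps_optimal F J (bn n) (en n) (An n)) -> nj @ \oo --> \oo ->
  (forall j, An (nj j) (z j)) -> J +oo%E x = c%:E ->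
  mconv dist (fun j => eta (bn (nj j))%:E (z j)) x ->
  (fun j => J (bn (nj j))%:E (z j)) @ \oo --> c%:E /\
  (fun j => J (bn (nj j))%:E (eta (bn (nj j))%:E (z j))) @ \oo --> c%:E.
Proof.
move=> An_opt nj_oo Az Jx eta_z_x.
have bnj_oo := cvg_comp _ _ nj_oo bn_oo.
have J_le j : (J (bn (nj j))%:E (eta (bn (nj j))%:E (z j)) <= J (bn (nj j))%:E (z j)
                <= (c + en (nj j))%:E)%E.
  rewrite (eps_optimal_le (bn_gt0 _) (An_opt _) (Az j)) andbT.
  apply: eta_decr; first by rewrite lte_fin.
  exact: eps_optimal_sublevel (bn_gt0 _) (en_le1 _) (An_opt _) _ (Az j).
have J_eta_gt t : t < c ->
    \forall j \near \oo, (t%:E < J (bn (nj j))%:E (eta (bn (nj j))%:E (z j)))%E.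
  by move=> t_lt; apply: lt_Jinfty_near bnj_oo eta_z_x _; rewrite Jx lte_fin.
have bound_lt t : c < t -> \forall j \near \oo, ((c + en (nj j))%:E < t%:E)%E.
  move=> c_lt; have : \forall j \near \oo, en (nj j) < t - c.
    by apply: cvgr_lt (cvg_comp _ _ nj_oo en_cvg0) _ _; rewrite subr_gt0.
  by apply: filterS => j; rewrite lte_fin => ?; lra.
split; apply: cvge_EFin_bounds => t /[dup] t_c.
- move=> /J_eta_gt; apply: filterS => j /lt_le_trans; apply.
  by case/andP: (J_le j).
- move=> /bound_lt; apply: filterS => j; apply: le_lt_trans.
  by case/andP: (J_le j).
- exact: J_eta_gt.
- move=> /bound_lt; apply: filterS => j; apply: le_lt_trans.
  by case/andP: (J_le j) => /le_trans; apply.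
Unshelve. all: end_near. Qed.

Lemma eps_optimal_limit_point (An : nat -> set M) :
  (forall n, eps_optimal F J (bn n) (en n) (An n)) ->
  exists x, Cstar dist F J eta x /\ Kset F J eta +oo%E x /\ limsup_set dist An x.
Proof.
move=> An_opt; pose Tn n := eta (bn n)%:E @` An n.
have Tn_opt n : eps_optimal F J (bn n) (en n) (Tn n) by exact: eta_eps_optimal.
have B_le := limsup_Jinfty_le Tn_opt.
have B_sub : limsup_set dist Tn `<=` sublevel F J +oo%E.
  move=> y /B_le Jy; rewrite /sublevel /= cval_infty.
  by apply: le_trans Jy _; rewrite lee_fin lerDl.
have [x Bx Kx] :=
  optimal_meets_Kset lt0y cval_infty (limsup_eps_optimal_F Tn_opt) B_sub B_le.
case: Bx => nj [w [/limsup_indexP nj_oo [Tw w_x]]].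
have z_ex j : exists y, An (nj j) y /\ eta (bn (nj j))%:E y = w j.
  by case: (Tw j) => y Ay <-; exists y.
have [z /all_and2 [Az eta_z]] := choice z_ex.
have eta_z_x : mconv dist (fun j => eta (bn (nj j))%:E (z j)) x.
  by rewrite (funext eta_z).
have Jx : J +oo%E x = c%:E by case: Kx => ->.
have [Jz Jeta_z] := eps_optimal_values_cvg An_opt nj_oo Az Jx eta_z_x.
have [psi [psi_incr [z_x Cx]]] : exists psi, subseq_map psi /\
    mconv dist (z \o psi) x /\ Cstar dist F J eta x.
  apply: (ups_Cstar (bs := bn \o nj)) eta_z_x; rewrite ?cval_infty //.
    by move=> j; exact: bn_gt0.
  by apply/to_pinftyP; exact: cvg_comp _ _ nj_oo bn_oo.
exists x; split => //; split => //.
exists (nj \o psi), (z \o psi); split; last by split => // j; exact: Az.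
by apply/limsup_indexP; exact: cvg_comp _ _ (subseq_map_cvgn psi_incr) nj_oo.
Qed.

End EpsOptimalSequence.

End MinimaxLimit.

Theorem theorem2p11 (R : realType) (M : Type) (dist : M -> M -> R)
  (F : set (set M)) (J : \bar R -> M -> \bar R) (eta : \bar R -> M -> M) :
  is_metric dist ->
  (* J_beta takes values in R \cup {+oo} *)
  (forall (b : R) x, 0 < b -> J b%:E x != -oo%E) ->
  (* J_beta lower semicontinuous, 0 < beta < +oo *)
  (forall b : R, 0 < b -> lsc dist (J b%:E)) ->
  (* monotone in beta *)
  (forall (b1 b2 : R), 0 < b1 -> b1 <= b2 -> forall x, (J b1%:E x <= J b2%:E x)%E) ->
  (* J_oo = sup_{beta > 0} J_beta *)
  (forall x, J +oo%E x = ereal_sup [set J b%:E x | b in [set b : R | 0 < b]]) ->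
  (* c_beta real for 0 < beta <= +oo *)
  (forall b : \bar R, (0 < b)%E -> cval F J b \is a fin_num) ->
  (* every A in F is closed *)
  (forall A, F A -> mclosed dist A) ->
  (* limsup closure of F on sublevel sets *)
  (forall (An : nat -> set M) (b : \bar R), (0 < b)%E ->
     (forall n, F (An n)) -> (forall n, An n `<=` sublevel F J b) ->
     F (limsup_set dist An)) ->
  (* eta_beta maps M^{c_oo+1}_beta into itself *)
  (forall (b : \bar R) x, (0 < b)%E -> sublevel F J b x -> sublevel F J b (eta b x)) ->
  (* eta_beta preserves F *)
  (forall (b : \bar R) (A : set M), (0 < b)%E -> F A -> A `<=` sublevel F J b ->
     F (eta b @` A)) ->
  (* eta_beta decreases J_beta *)
  (forall (b : \bar R) x, (0 < b)%E -> sublevel F J b x -> (J b (eta b x) <= J b x)%E) ->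
  (* compactness condition *)
  (forall (b : \bar R) (xn : nat -> M), (0 < b)%E ->
     (fun n => J b (xn n)) @ \oo --> cval F J b ->
     (fun n => J b (eta b (xn n))) @ \oo --> cval F J b ->
     exists phi : nat -> nat, subseq_map phi /\
       exists2 x, Kset F J eta b x & mconv dist (xn \o phi) x) ->
  (* (UPS) *)
  (forall (xn : nat -> M) (bn : nat -> R),
     (forall n, 0 < bn n) -> to_pinfty bn ->
     (fun n => J (bn n)%:E (xn n)) @ \oo --> cval F J +oo%E ->
     (fun n => J (bn n)%:E (eta (bn n)%:E (xn n))) @ \oo --> cval F J +oo%E ->
     exists xbar : M, exists phi : nat -> nat, subseq_map phi /\
       mconv dist (xn \o phi) xbar /\
       mconv dist (fun n => eta (bn (phi n))%:E (xn (phi n))) xbar) ->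
  (Cstar dist F J eta `&` Kset F J eta +oo%E !=set0) /\
  (forall (bn : nat -> R) (An : nat -> set M),
     (forall n, 0 < bn n) -> to_pinfty bn ->
     (forall n, optimal F (J (bn n)%:E) (cval F J (bn n)%:E) (An n)) ->
     exists xbar : M, Cstar dist F J eta xbar /\ Kset F J eta +oo%E xbar /\
       limsup_set dist An xbar).
Proof.
move=> dist_metric _ J_lsc J_mono J_infty cval_fin F_closed F_limsup _ eta_F
  eta_decr PS UPS.
have cval_infty : cval F J +oo%E = (fine (cval F J +oo%E))%:E.
  by rewrite fineK //; exact: cval_fin.
have limit_point := eps_optimal_limit_point dist_metric J_lsc J_mono J_infty
  F_closed F_limsup eta_F eta_decr PS UPS cval_infty.
split.
  pose bn n : R := n.+1%:R.
  have bn_gt0 n : 0 < bn n by rewrite ltr0n.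
  have An_ex n : exists A, eps_optimal F J (bn n) (harmonic n) A.
    by apply: eps_optimal_exists; rewrite ?harmonic_gt0 ?cval_fin ?lte_fin.
  have [An An_opt] := choice An_ex.
  have bn_oo : bn @ \oo --> +oo by apply/cvgrnyP; exact: subseq_map_cvgn.
  have harmonic_le1 n : harmonic n <= 1 :> R by rewrite /= invf_le1 ?ler1n ?ltr0n.
  have [x [Cx [Kx _]]] :=
    limit_point bn harmonic bn_gt0 bn_oo harmonic_le1 cvg_harmonic An An_opt.
  by exists x.
move=> bn An bn_gt0 /to_pinftyP bn_oo An_opt.
apply: (limit_point bn (fun=> 0) bn_gt0 bn_oo (fun=> ler01)) => [|n].
  exact: (cvg_cst 0 (F := \oo)).
exact: optimal_eps_optimal.
Qed.
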